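(* Let $n\ge1$ and $\alpha,\beta\in(0,1]$. The following two properties hold. (a) For all $\mathcal{C},\mathcal{C}'\in\{\bullet,\circ\}^n$ and every $\widehat{T}\in\mathcal{F}(\mathcal{C}'\to\mathcal{C})$, we have $\hat\mu(\widehat{T})=\mu(f(\widehat{T}))\,W(\mathcal{C}'\to\mathcal{C})$. (b) For every $\widehat{T}\in\widehat{\mathcal{T}}_n$, we have $\hat\mu(\pi(\widehat{T}))=\hat\mu(\widehat{T})$.
   Context: Open-boundary TASEP on $n$ sites: this is the continuous-time Markov chain on $\{\bullet,\circ\}^n$ (strings of length $n$, where $\bullet$ denotes a particle and $\circ$ a hole). Its transition rates are as follows, with $\mathcal{A},\mathcal{A}'$ arbitrary strings: - $W(\circ\mathcal{A}\to\bullet\mathcal{A})=\alpha$; - $W(\mathcal{A}\bullet\to\mathcal{A}\circ)=\beta$; - $W(\mathcal{A}\bullet\circ\mathcal{A}'\to\mathcal{A}\circ\bullet\mathcal{A}')=1$; - $W(\mathcal{C}\to\mathcal{C}')=0$ for all other pairs. A plane binary tree is a finite rooted tree in which every vertex is either an endpoint (a leaf, with no children) or has exactly two children, an ordered left child and right child. Every non-root vertex is thus either a left descendent or a right descendent of its parent. The endpoints are ordered from left to right in the planar order. $\mathcal{T}_n$ denotes the set of plane binary trees with exactly $n+2$ endpoints. The reduced configuration of $T\in\mathcal{T}_n$ is $R(T)=(t_1,\dots,t_n)\in\{\bullet,\circ\}^n$. Here $t_k=\bullet$ if the $(k+1)$-th endpoint from the left is a left child, and $t_k=\circ$ if it is a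 right child. The leftmost and rightmost endpoints are ignored. $l(T)$ (respectively $r(T)$) is the number of vertices lying strictly between the leftmost (respectively rightmost) endpoint and the root on the path joining them, excluding both the endpoint and the root. Set $\mu(T)=\alpha^{-l(T)}\beta^{-r(T)}$. A last branching vertex of a plane binary tree is a non-endpoint vertex both of whose children are endpoints. A marked tree is a pair $(T,v)$ with $T\in\mathcal{T}_n$ and $v$ a last branching vertex of $T$. The set of marked trees is $\widehat{\mathcal{T}}_n$. The map $f:\widehat{\mathcal{T}}_n\to\mathcal{T}_n$, $f(T,v)=T$, forgets the mark. For $(T,v)\in\widehat{\mathcal{T}}_n$, define $l'(T,v)$ (respectively $r'(T,v)$) as the number of vertices other than $v$ lying strictly between the leftmost (respectively rightmost) endpoint and the root. Set $\hat\mu(T,v)=\alpha^{-l'(T,v)}\beta^{-r'(T,v)}$. Definition of $\pi:\widehat{\mathcal{T}}_n\to\widehat{\mathcal{T}}_n$. Let $(T,v)\in\widehat{\mathcal{T}}_n$, and let $a$ and $b$ be the left and right children of $v$ (both endpoints). Case 1: $v$ is a right child. - Delete the endpoint $a$ together with the edge $va$. The vertex $v$ and its remaining child $b$ are merged into a single endpoint, sitting at $v$'s position; this endpoint is a right child. - If $b$ was not the rightmost endpoint of $T$, replace the first right-child endpoint to the right of this new endpoint by a new internal vertex $w$ with two new endpoint children. - If $b$ was the rightmost endpoint of $T$, replace the rightmost left-child endpoint of the reduced tree by a new internal vertex $w$ with two new endpoint children. - In either sub-case, $\pi(T,v)=(T',w)$, where $T'$ is the resulting tree and the mark is on $w$.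 Case 2: $v$ is a left child. Apply the mirror image of Case 1, exchanging left and right. - Delete $b$ and the edge $vb$, merging $v$ and $a$ into an endpoint. - If $a$ was not the leftmost endpoint of $T$, graft a cherry $w$ onto the first left-child endpoint to its left. - Otherwise, graft the cherry $w$ onto the leftmost right-child endpoint. - Mark $w$. For $\mathcal{C},\mathcal{C}'\in\{\bullet,\circ\}^n$, define $\mathcal{F}(\mathcal{C}'\to\mathcal{C}):=(R\circ f)^{-1}\{\mathcal{C}'\}\cap(R\circ f\circ\pi)^{-1}\{\mathcal{C}\}$. *)

From HB Require Import structures.
From mathcomp Require Import all_boot all_order all_algebra.
Set Implicit Arguments. Unset Strict Implicit. Unset Printing Implicit Defensive.
Import Order.TTheory GRing.Theory Num.Theory.

Inductive tree := Leaf | Node of tree & tree.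

Fixpoint nleaves (T : tree) : nat :=
  match T with Leaf => 1 | Node l r => nleaves l + nleaves r end.

(* Vertices are addressed by paths from the root: false = go to left child,
   true = go to right child. *)
Definition vpath := seq bool.

Fixpoint subtree (T : tree) (p : vpath) : option tree :=
  match p, T with
  | [::], _ => Some T
  | false :: p', Node l _ => subtree l p'
  | true :: p', Node _ r => subtree r p'
  | _ :: _, Leaf => None
  end.

Fixpoint replace_at (T : tree) (p : vpath) (S : tree) : tree :=
  match p, T with
  | [::], _ => S
  | false :: p', Node l r => Node (replace_at l p' S) r
  | true :: p', Node l r => Node l (replace_at r p' S)
  | _ :: _, Leaf => Leaf
  end.

Fixpoint leaf_paths (T : tree) : seq vpath :=
  match T with
  | Leaf => [:: [::]]
  | Node l r => map (cons false) (leaf_paths l) ++ map (cons true) (leaf_paths r)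
  end.

Definition is_right (q : vpath) : bool := last false q.
Definition is_left (q : vpath) : bool := (q != [::]) && ~~ last true q.

Definition is_cherry (T : tree) (p : vpath) : bool :=
  match subtree T p with Some (Node Leaf Leaf) => true | _ => false end.

(* marked trees (T,v) in \hat T_n ; f is the first projection *)
Definition marked (n : nat) (X : tree * vpath) : bool :=
  (nleaves X.1 == n.+2) && is_cherry X.1 X.2.

Definition f (X : tree * vpath) : tree := X.1.

(* Reduced configuration: true = particle (endpoint is a left child),
   false = hole (right child); leftmost and rightmost endpoints ignored. *)
Definition Rconf (T : tree) : seq bool :=
  let ps := leaf_paths T in map is_left (take (size ps).-2 (behead ps)).

Definition between (q : vpath) : seq vpath :=
  [seq take k q | k <- iota 1 (size q).-1].

Definition leftmost (T : tree) : vpath := head [::] (leaf_paths T).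
Definition rightmost (T : tree) : vpath := last [::] (leaf_paths T).

Definition lT (T : tree) : nat := size (between (leftmost T)).
Definition rT (T : tree) : nat := size (between (rightmost T)).

Definition mu {R : unitRingType} (alpha beta : R) (T : tree) : R :=
  alpha ^- lT T * beta ^- rT T.

Definition l' (X : tree * vpath) : nat :=
  count (fun u => u != X.2) (between (leftmost X.1)).
Definition r' (X : tree * vpath) : nat :=
  count (fun u => u != X.2) (between (rightmost X.1)).

Definition muhat {R : unitRingType} (alpha beta : R) (X : tree * vpath) : R :=
  alpha ^- l' X * beta ^- r' X.

Definition cherry : tree := Node Leaf Leaf.

(* The map pi on marked trees (arbitrary but harmless on non-marked input). *)
Definition pi_map (X : tree * vpath) : tree * vpath :=
  let: (T, p) := X in
  if p is [::] then X else
  let ps := leaf_paths T in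
  let T' := replace_at T p Leaf in
  let ps' := leaf_paths T' in
  if last false p then
    (* Case 1: v is a right child; b = rcons p true *)
    let q := if rcons p true != last [::] ps then
               (* first right-child endpoint to the right of the new endpoint *)
               let i := index p ps' in
               nth [::] ps' (i.+1 + find is_right (drop i.+1 ps'))
             else
               (* rightmost left-child endpoint of the reduced tree *)
               nth [::] (rev ps') (find is_left (rev ps')) in
    (replace_at T' q cherry, q)
  else
    (* Case 2: v is a left child; a = rcons p false *)
    let q := if rcons p false != head [::] ps then
               (* first left-child endpoint to the left of the new endpoint *)
               let i := index p ps' in
               nth [::] (rev (take i ps')) (find is_left (rev (take i ps')))
             else
               (* leftmost right-child endpoint of the reduced tree *)
               nth [::] ps' (find is_right ps') in
    (replace_at T' q cherry, q).

(* TASEP transition rates W(C' -> C); true = particle, false = hole. *)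
Definition hop (C' C : seq bool) : bool :=
  has (fun k => (C' == take k C' ++ [:: true; false] ++ drop k.+2 C') &&
                (C == take k C' ++ [:: false; true] ++ drop k.+2 C'))
      (iota 0 (size C')).

Definition W {R : nzRingType} (alpha beta : R) (C' C : seq bool) : R :=
  (if (C' == false :: behead C') && (C == true :: behead C') then alpha
  else if (C' == rcons (take (size C').-1 C') true) &&
          (C == rcons (take (size C').-1 C') false) then beta
  else if hop C' C then 1%R
  else 0)%R.

Definition inF (n : nat) (C' C : seq bool) (X : tree * vpath) : bool :=
  [&& marked n X, Rconf (f X) == C' & Rconf (f (pi_map X)) == C].

(* Collapsing the marked cherry v of a marked tree (T, v) yields a tree U in which v is an
   endpoint, and T is recovered by grafting a cherry at that endpoint. The boundary paths of
   T and of U contain the same vertices apart from v itself, which muhat does not count, so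
   muhat (T, v) = mu U. The map pi collapses v and grafts a cherry at another endpoint of the
   same U, hence (b). For (a), mu T differs from mu U by the factor alpha, beta or 1 according
   as v sits at the leftmost endpoint of U, at the rightmost one, or elsewhere; reading the
   left/right pattern of the endpoints of U, the reduced configurations of T and of
   f (pi (T, v)) differ by an entry, an exit or a single hop, whose rate is that same factor. *)

From Pilot Require Import Defs.
From HB Require Import structures.
From mathcomp Require Import all_boot all_order all_algebra zify.
Import Order.TTheory GRing.Theory Num.Theory.
Set Implicit Arguments. Unset Strict Implicit. Unset Printing Implicit Defensive.

(* The [is_left] of Defs, not the sumbool test of ssrbool. *)
Local Notation is_left := Defs.is_left.

Lemma uniq_leaf_paths T : uniq (leaf_paths T).
Proof.
elim: T => //= l IHl r IHr.
rewrite cat_uniq !map_inj_uniq ?IHl ?IHr //=; try by move=> ? ? [].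
by rewrite andbT; apply/hasPn => _ /mapP [y _ ->]; apply/mapP => -[].
Qed.

Lemma leaf_paths_neq_nil T : leaf_paths T != [::].
Proof. by elim: T => //= l IHl r _; case: (leaf_paths l) IHl. Qed.

Lemma leaf_paths_node_neq_nil l r q : q \in leaf_paths (Node l r) -> q != [::].
Proof. by rewrite mem_cat => /orP [] /mapP [? _ ->]. Qed.

Lemma size_leaf_paths_node l r : (1 < size (leaf_paths (Node l r)))%N.
Proof.
have size_gt0 T : (0 < size (leaf_paths T))%N by rewrite lt0n size_eq0 leaf_paths_neq_nil.
by rewrite /= size_cat !size_map -(addn1 1) leq_add.
Qed.

Lemma head_leaf_paths T : all negb (head [::] (leaf_paths T)).
Proof.
elim: T => //= l IHl r _.
by move: (leaf_paths_neq_nil l) IHl; case: (leaf_paths l).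
Qed.

Lemma last_leaf_paths T : all id (last [::] (leaf_paths T)).
Proof.
elim: T => //= l _ r IHr.
move: (leaf_paths_neq_nil r) IHr; case: (leaf_paths r) => [|x s] //= _.
by rewrite last_cat /= last_map.
Qed.

Lemma subtree_cat T u v :
  subtree T (u ++ v) = if subtree T u is Some U then subtree U v else None.
Proof. by elim: u T => [|[] u IH] [|l r] /=. Qed.

Lemma subtree_leaf_paths T q : q \in leaf_paths T -> subtree T q = Some Leaf.
Proof.
elim: T q => [|l IHl r IHr] q /=; first by rewrite inE => /eqP ->.
by rewrite mem_cat => /orP [] /mapP [y Hy ->]; [apply: IHl | apply: IHr].
Qed.

Lemma rcons_notin_leaf_paths T q b : q \in leaf_paths T -> rcons q b \notin leaf_paths T.
Proof.
move/subtree_leaf_paths => qT; apply/negP => /subtree_leaf_paths.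
by rewrite -cats1 subtree_cat qT; case: b.
Qed.

Lemma subtree_replace_at T q S :
  subtree T q <> None -> subtree (replace_at T q S) q = Some S.
Proof.
by elim: q T => [|b q IH] [|l r] /=; [case: S | case: S | case: b | case: b => /= /IH].
Qed.

Lemma replace_atK T q S S' :
  subtree T q <> None -> replace_at (replace_at T q S) q S' = replace_at T q S'.
Proof.
by elim: q T => [|b q IH] [|l r] /=; [case: S | case: S | case: b | case: b => /= /IH ->].
Qed.

Lemma replace_at_subtree T q S : subtree T q = Some S -> replace_at T q S = T.
Proof.
by elim: q T => [|b q IH] [|l r] /=; [case=> <- | case=> <- | case: b | case: b => /= /IH ->].
Qed.

Lemma leaf_paths_split_leaf T q : subtree T q = Some Leaf ->
  exists A B, leaf_paths T = A ++ q :: B /\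
    leaf_paths (replace_at T q cherry) = A ++ [:: rcons q false, rcons q true & B].
Proof.
elim: q T => [|b q IH] [|l r] //=; [by exists [::], [::] | by case: b | case: b => /=].
- move=> /IH [A [B [E E']]].
  exists (map (cons false) (leaf_paths l) ++ map (cons true) A), (map (cons true) B).
  by rewrite /= E E' !map_cat -!catA.
- move=> /IH [A [B [E E']]].
  exists (map (cons false) A), (map (cons false) B ++ map (cons true) (leaf_paths r)).
  by rewrite /= E E' !map_cat -!catA.
Qed.

Lemma leaf_paths_replace_cherry T A q B : leaf_paths T = A ++ q :: B ->
  leaf_paths (replace_at T q cherry) = A ++ [:: rcons q false, rcons q true & B].
Proof.
move=> E; have q_leaf : q \in leaf_paths T by rewrite E mem_cat mem_head orbT.
have [A' [B' [E' ->]]] := leaf_paths_split_leaf (subtree_leaf_paths q_leaf).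
have := uniq_leaf_paths T; rewrite E => uniq_ps.
by move/eqP: E'; rewrite E uniq_eqseq_pivotl // => /andP [/eqP <- /eqP <-].
Qed.

Lemma size_between h : size (between h) = (size h).-1.
Proof. by rewrite size_map size_iota. Qed.

Lemma between_rcons v b : v != [::] -> between (rcons v b) = rcons (between v) v.
Proof.
rewrite -size_eq0 -lt0n => /prednK size_v.
rewrite /between size_rcons /= -{1}size_v -[_.-1.+1]addn1 iotaD map_cat add1n size_v /= cats1.
congr rcons; last by rewrite -cats1 take_size_cat.
apply/eq_in_map => k; rewrite mem_iota => /andP [_ lt_k].
by rewrite -cats1 takel_cat //; lia.
Qed.

Lemma notin_between_self v : v \notin between v.
Proof.
case: v => [|x v] //; apply/mapP => -[k]; rewrite mem_iota add1n => /andP [_ lt_k].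
move/(congr1 size); rewrite /= in lt_k *; rewrite size_take /= lt_k => eq_k.
by move: lt_k; rewrite -eq_k ltnn.
Qed.

Lemma leaf_notin_between T q h :
  q \in leaf_paths T -> h \in leaf_paths T -> q \notin between h.
Proof.
move=> /subtree_leaf_paths qT; case: h => [|x h] // /subtree_leaf_paths hT.
apply/mapP => -[k]; rewrite mem_iota add1n => /andP [_ lt_k] q_eq.
move: hT; rewrite -(cat_take_drop k (x :: h)) subtree_cat -q_eq qT.
have : drop k (x :: h) != [::] by rewrite -size_eq0 size_drop subn_eq0 -ltnNge.
by case: (drop k (x :: h)) => [|[]].
Qed.

Lemma count_between_notin v h :
  v \notin between h -> count (fun u => u != v) (between h) = size (between h).
Proof.
move=> vh; apply/eqP; rewrite -all_count.
by apply/allP => u uh; apply: contraNneq vh => <-.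
Qed.

Lemma count_between_rcons v b :
  v != [::] -> count (fun u => u != v) (between (rcons v b)) = size (between v).
Proof.
move=> nv; rewrite between_rcons // -cats1 count_cat count_between_notin ?notin_between_self //.
by rewrite /= eqxx /= !addn0.
Qed.

Lemma muhat_replace_cherry (R : unitRingType) (alpha beta : R) U A q B :
  leaf_paths U = A ++ q :: B -> q != [::] ->
  muhat alpha beta (replace_at U q cherry, q) = mu alpha beta U.
Proof.
move=> E nq; have leaf_U h : h \in A ++ q :: B -> h \in leaf_paths U by rewrite E.
have count_leaf h : h \in A ++ q :: B -> count (fun u => u != q) (between h) = size (between h).
  move=> hU; apply: count_between_notin; apply: leaf_notin_between (leaf_U _ hU).
  by apply: leaf_U; rewrite mem_cat mem_head orbT.
rewrite /muhat /mu /l' /r' /lT /rT /leftmost /rightmost /= (leaf_paths_replace_cherry E) E.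
congr (_ * _)%R; congr (_ ^- _)%R.
- case: A {E leaf_U} count_leaf => [|a A] count_leaf /=; first exact: count_between_rcons.
  by apply: count_leaf; rewrite mem_head.
- rewrite !last_cat /=; case: B {E leaf_U} count_leaf => [|b B] count_leaf /=.
    exact: count_between_rcons.
  by apply: count_leaf; rewrite mem_cat in_cons mem_last !orbT.
Qed.

Lemma is_leftE x q : q != [::] -> is_left q = ~~ last x q.
Proof. by case: q. Qed.

Lemma is_left_rcons q b : is_left (rcons q b) = ~~ b.
Proof. by rewrite /is_left last_rcons; case: q. Qed.

Lemma is_rightE q : q != [::] -> is_right q = ~~ is_left q.
Proof. by move=> nq; rewrite (is_leftE false) ?negbK. Qed.

Lemma find_is_left s : find is_left s = index true (map is_left s).
Proof. by rewrite /index find_map; apply: eq_find => x; rewrite /= eqb_id. Qed.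

Lemma find_is_right (s : seq vpath) : {in s, forall h, h != [::]} ->
  find is_right s = index false (map is_left s).
Proof.
move=> ns; rewrite /index find_map; apply: eq_in_find => x /ns nx.
by rewrite /= is_rightE // eqbF_neg.
Qed.

Lemma nth_rev_find_is_left (s : seq vpath) : true \in map is_left s ->
  nth [::] (rev s) (find is_left (rev s)) =
  nth [::] s (size s - (index true (rev (map is_left s))).+1).
Proof.
move=> sT; rewrite find_is_left map_rev nth_rev // -(size_map is_left) -size_rev.
by rewrite index_mem mem_rev.
Qed.

Lemma head_word_node l r : head false (map is_left (leaf_paths (Node l r))).
Proof.
move: (head_leaf_paths (Node l r)) (@leaf_paths_node_neq_nil l r).
case: (leaf_paths _) (leaf_paths_neq_nil (Node l r)) => [|h s] //= _ hF nonnil.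
have hF' : all negb (false :: h) by [].
by rewrite (is_leftE false) ?(negbTE (allP hF' _ (mem_last false h))) // nonnil ?mem_head.
Qed.

Lemma last_word_node l r : ~~ last true (map is_left (leaf_paths (Node l r))).
Proof.
move: (last_leaf_paths (Node l r)) (@leaf_paths_node_neq_nil l r).
case/lastP: (leaf_paths _) (leaf_paths_neq_nil (Node l r)) => [|s h] //= _.
rewrite map_rcons !last_rcons => hT nonnil.
have hT' : all id (true :: h) by [].
by rewrite (is_leftE true) ?negbK ?(allP hT' _ (mem_last true h)) // nonnil ?mem_rcons ?mem_head.
Qed.

Definition inner_word (s : seq bool) : seq bool := take (size s).-2 (behead s).

Definition graft_word (w : seq bool) (i : nat) : seq bool :=
  take i w ++ [:: true, false & drop i.+1 w].

Lemma Rconf_inner_word T : Rconf T = inner_word (map is_left (leaf_paths T)).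
Proof. by rewrite /Rconf /inner_word map_take behead_map size_map. Qed.

Lemma graft_word_cat u x v : graft_word (u ++ x :: v) (size u) = u ++ [:: true, false & v].
Proof. by rewrite /graft_word take_size_cat // drop_cat ltnNge leqnSn subSnn /= drop0. Qed.

Lemma Rconf_replace_cherry U A q B : leaf_paths U = A ++ q :: B ->
  Rconf (replace_at U q cherry) = inner_word (graft_word (map is_left (leaf_paths U)) (size A)).
Proof.
move=> E; rewrite Rconf_inner_word (leaf_paths_replace_cherry E) E !map_cat /=.
by rewrite -(size_map is_left A) graft_word_cat !is_left_rcons.
Qed.

Lemma inner_word_cat x u v : v != [::] -> inner_word (x :: u ++ v) = u ++ take (size v).-1 v.
Proof.
case: v => // y v _; rewrite /inner_word /= size_cat take_cat addnS /=.
by rewrite ltnNge leq_addr /= addKn.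
Qed.

Lemma nseq_cat_cons (T : Type) k (x : T) s : nseq k x ++ x :: s = x :: nseq k x ++ s.
Proof. by elim: k => //= k ->. Qed.

Lemma nseq_index (b : bool) s :
  b \in s -> s = nseq (index b s) (~~ b) ++ b :: drop (index b s).+1 s.
Proof.
elim: s => //= x s IH; rewrite inE eq_sym; case: eqP => [-> _ | /eqP neq /IH {1}->] /=.
  by rewrite drop0.
by case: b x neq {IH} => [] [].
Qed.

Lemma nseq_index_rev (b : bool) s (k := index b (rev s)) :
  b \in s -> s = rev (drop k.+1 (rev s)) ++ b :: nseq k (~~ b).
Proof.
rewrite -mem_rev => /nseq_index E.
by rewrite -[LHS]revK {1}E rev_cat rev_nseq rev_cons cat_rcons.
Qed.

Lemma mem_last_neq_nil (T : eqType) (x0 : T) s : s != [::] -> last x0 s \in s.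
Proof. by case: s => // x s _; rewrite /= mem_last. Qed.

(* The position of the endpoint that [pi_map] turns into a cherry, computed from the
   left/right pattern [w] of the endpoints of the collapsed tree and from the position [i]
   of the collapsed cherry. *)
Definition pi_index (w : seq bool) (i : nat) : nat :=
  if ~~ nth false w i then
    if i != (size w).-1 then (i.+1 + index false (drop i.+1 w))%N
    else (size w - (index true (rev w)).+1)%N
  else if i != 0%N then (i - (index true (rev (take i w))).+1)%N
  else index false w.

Variant pi_index_spec (w : seq bool) (i : nat) : nat -> Type :=
  | PiHopRight u k v of w = u ++ false :: nseq k true ++ false :: v
      & i = size u & u != [::] : pi_index_spec w i (size u + k.+1)
  | PiHopLeft u k v of w = u ++ true :: nseq k false ++ true :: v
      & i = (size u + k.+1)%N & v != [::] : pi_index_spec w i (size u)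
  | PiExit u k of w = u ++ true :: nseq k.+1 false
      & i = (size u + k.+1)%N : pi_index_spec w i (size u)
  | PiEntry k v of w = true :: nseq k true ++ false :: v
      & i = 0%N : pi_index_spec w i k.+1.

Lemma pi_indexP w i : head false w -> ~~ last true w -> (i < size w)%N ->
  pi_index_spec w i (pi_index w i).
Proof.
move=> hw lw lt_i; have size_u : size (take i w) = i by rewrite size_takel // ltnW.
have w_i : w = take i w ++ nth false w i :: drop i.+1 w by rewrite -drop_nth ?cat_take_drop.
have last_w : last true w = last (nth false w i) (drop i.+1 w) by rewrite {1}w_i last_cat.
have wT : true \in w by rewrite -hw -nth0 mem_nth // (leq_ltn_trans _ lt_i).
rewrite /pi_index; case wi: (nth false w i) w_i last_w => /= w_i last_w; last first.
- case: ifPn => [not_last | /negPn/eqP last_i].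
  + have nv : drop i.+1 w != [::].
      rewrite -size_eq0 size_drop subn_eq0 -ltnNge; move/eqP: not_last lt_i.
      by case: (size w) => //= m; lia.
    have /nseq_index E : false \in drop i.+1 w.
      by have := mem_last_neq_nil false nv; rewrite -last_w (negbTE lw).
    rewrite {}E in w_i; rewrite -{2}size_u addSnnS.
    apply: PiHopRight w_i (esym size_u) _; rewrite -size_eq0 size_u.
    by apply: contraTneq hw => i0; rewrite -nth0 -i0 wi.
  + have /nseq_index_rev := wT; move: (rev (drop _ _)) => u.
    case: (index true (rev w)) => [|k] E; first by move: lw; rewrite E last_cat.
    have size_w : size w = (size u + k.+2)%N by rewrite {1}E size_cat /= size_nseq.
    rewrite size_w addnK; apply: PiExit E _.
    by rewrite last_i size_w addnS.
- have nv : drop i.+1 w != [::] by apply: contraNneq lw => dv; rewrite last_w dv.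
  case: ifPn => [i_neq0 | /negPn/eqP i0].
  + have uT : true \in take i w.
      rewrite -lt0n in i_neq0.
      by rewrite -hw -nth0 -(nth_take _ i_neq0) mem_nth ?size_u.
    have /nseq_index_rev := uT; set k := index _ _; move: (rev _) => u E; clearbody k.
    have size_i : i = (size u + k.+1)%N by rewrite -size_u E size_cat /= size_nseq.
    rewrite {}E -catA in w_i; rewrite {2}size_i addnK.
    exact: PiHopLeft w_i size_i nv.
  + subst i; have /nseq_index E : false \in drop 1 w.
      by have := mem_last_neq_nil true nv; rewrite -last_w (negbTE lw).
    rewrite [X in index _ X]w_i take0 /=; rewrite {}E take0 /= in w_i.
    exact: PiEntry w_i _.
Qed.

Lemma pi_index_lt w i : head false w -> ~~ last true w -> (i < size w)%N ->
  (pi_index w i < size w)%N.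
Proof.
move=> hw lw lt_i; case: pi_indexP => // [u k v | u k v | u k | k v] -> *.
all: by rewrite /= ?size_cat /= ?size_cat /= ?size_nseq; lia.
Qed.

Local Open Scope ring_scope.

(* The rate of the move encoded by a cherry at the [i]-th of the [n] endpoints of the
   collapsed tree: an entry, an exit or a bulk hop. *)
Definition cherry_rate {R : nzRingType} (alpha beta : R) (i n : nat) : R :=
  if i == 0%N then alpha else if i.+1 == n then beta else 1.

Lemma expfV_pred (F : fieldType) (x : F) k :
  x != 0 -> (0 < k)%N -> x ^- k.-1 = x ^- k * x.
Proof. by move=> nx /prednK {2}<-; rewrite exprSr invfM -mulrA mulVf ?mulr1. Qed.

Lemma mu_replace_cherry (F : fieldType) (alpha beta : F) U A q B :
  alpha != 0 -> beta != 0 -> q != [::] -> (1 < size (leaf_paths U))%N ->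
  leaf_paths U = A ++ q :: B ->
  mu alpha beta U =
    mu alpha beta (replace_at U q cherry) * cherry_rate alpha beta (size A) (size (leaf_paths U)).
Proof.
move=> na nb nq size_U E; rewrite E in size_U.
have size_q : (0 < size q)%N by rewrite lt0n size_eq0.
rewrite /mu /lT /rT /leftmost /rightmost !size_between (leaf_paths_replace_cherry E) E.
rewrite /cherry_rate !last_cat /=.
case: A E size_U => [|a A] E; case: B E => [|b B] E //= _; rewrite ?size_rcons.
- by rewrite (expfV_pred na) // mulrAC.
- by rewrite size_cat addn1 eqxx (expfV_pred nb) // mulrA.
- by rewrite size_cat /= !addnS !eqSS ltn_eqF ?mulr1 // ltnS leq_addr.
Qed.

Section Rates.
Variables (R : nzRingType) (alpha beta : R).

Lemma cherry_rate_exit i : (0 < i)%N -> cherry_rate alpha beta i i.+1 = beta.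
Proof. by rewrite /cherry_rate eqxx => /gtn_eqF ->. Qed.

Lemma cherry_rate_bulk i n : (0 < i)%N -> (i.+1 < n)%N -> cherry_rate alpha beta i n = 1.
Proof. by rewrite /cherry_rate => /gtn_eqF -> /ltn_eqF ->. Qed.

Lemma W_hop_cat P S :
  W alpha beta (P ++ [:: true, false & S]) (P ++ [:: false, true & S]) = 1.
Proof.
have no_entry : (P ++ [:: true, false & S] == false :: behead (P ++ [:: true, false & S]))
    && (P ++ [:: false, true & S] == true :: behead (P ++ [:: true, false & S])) = false.
  by case: P => [|[] P] //=; rewrite !eqseq_cons ?andbF.
set C' := P ++ _ in no_entry *; set C := P ++ _ in no_entry *.
have no_exit : (C' == rcons (take (size C').-1 C') true) &&
               (C == rcons (take (size C').-1 C') false) = false.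
  apply/negP => /andP [/eqP E' /eqP E].
  have lt_P : (size P < (size C').-1)%N by rewrite /C' size_cat /=; lia.
  have lt_C' : ((size C').-1 < size C')%N by rewrite /C' size_cat /=; lia.
  move: (congr1 (nth false ^~ (size P)) E') (congr1 (nth false ^~ (size P)) E).
  by rewrite /C' /C !nth_cat ltnn subnn !nth_rcons size_take lt_C' lt_P => /= <-.
have is_hop : hop C' C.
  apply/hasP; exists (size P); first by rewrite mem_iota size_cat /= addnS ltnS leq_addr.
  rewrite /C' /C take_size_cat // -[_ ++ [:: true, false & S]]/(P ++ [:: true; false] ++ S).
  by rewrite catA drop_size_cat ?size_cat ?addn2 // -!catA !eqxx.
by rewrite /W no_entry no_exit is_hop.
Qed.

Lemma W_hop P S : P != [::] -> S != [::] ->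
  W alpha beta (inner_word (P ++ [:: true, false & S]))
               (inner_word (P ++ [:: false, true & S])) = 1.
Proof.
case: P => [|x P] // _; case: S => [|y S] // _.
by rewrite /= !inner_word_cat //= W_hop_cat.
Qed.

Lemma W_exit Q : Q != [::] ->
  W alpha beta (inner_word (Q ++ [:: true; false])) (inner_word (Q ++ [:: false; false])) = beta.
Proof.
case: Q => [|x Q] // _; rewrite /= !inner_word_cat //= !cats1 /W.
have -> : (rcons Q true == false :: behead (rcons Q true)) &&
          (rcons Q false == true :: behead (rcons Q true)) = false.
  by case: Q => [|[] Q] //=; rewrite !eqseq_cons ?andbF.
by rewrite size_rcons -cats1 take_size_cat // cats1 !eqxx.
Qed.

Lemma W_entry S : S != [::] ->
  W alpha beta (inner_word [:: true, false & S]) (inner_word [:: true, true & S]) = alpha.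
Proof.
move=> nS; rewrite -(cat0s [:: false & S]) -(cat0s [:: true & S]) !inner_word_cat //=.
by case: S nS => [|y S] //= _; rewrite /W /= !eqxx.
Qed.

Lemma W_pi_index w i : head false w -> ~~ last true w -> (i < size w)%N ->
  W alpha beta (inner_word (graft_word w i)) (inner_word (graft_word w (pi_index w i))) =
  cherry_rate alpha beta i (size w).
Proof.
move=> hw lw lt_i.
case: pi_indexP => // [u k v -> -> nu | u k v -> -> nv | u k -> -> | k v -> ->].
- have -> : (size u + k.+1)%N = size (u ++ false :: nseq k true).
    by rewrite size_cat /= size_nseq addnS.
  rewrite graft_word_cat (catA u [:: false & nseq k true]) graft_word_cat -catA /=.
  rewrite nseq_cat_cons W_hop //; last by rewrite -size_eq0 size_cat addnS.
  by rewrite cherry_rate_bulk ?lt0n ?size_eq0 // !size_cat /= size_nseq; lia.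
- rewrite graft_word_cat.
  have -> : (size u + k.+1)%N = size (u ++ true :: nseq k false).
    by rewrite size_cat /= size_nseq addnS.
  rewrite (catA u [:: true & nseq k false]) graft_word_cat -catA /= -nseq_cat_cons.
  rewrite !(catA u (true :: nseq k false)) W_hop //; last by rewrite -size_eq0 size_cat addnS.
  rewrite cherry_rate_bulk //; first by rewrite size_cat addnS.
  by move: nv; rewrite -size_eq0 !size_cat /=; lia.
- have -> : graft_word (u ++ true :: nseq k.+1 false) (size u) =
            (u ++ true :: nseq k false) ++ [:: false; false].
    by rewrite graft_word_cat -catA /= !nseq_cat_cons cats0.
  have -> : u ++ true :: nseq k.+1 false = (u ++ true :: nseq k false) ++ [:: false].
    by rewrite -catA /= nseq_cat_cons cats0.
  have -> : (size u + k.+1)%N = size (u ++ true :: nseq k false).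
    by rewrite size_cat /= size_nseq addnS.
  rewrite graft_word_cat W_exit; last by rewrite -size_eq0 size_cat addnS.
  by rewrite [size (_ ++ [:: false])]size_cat addn1 cherry_rate_exit // size_cat addnS.
- have -> : graft_word [:: true & nseq k true ++ false :: v] k.+1 =
            [:: true, true & nseq k true ++ false :: v].
    have -> : k.+1 = size (true :: nseq k true) by rewrite /= size_nseq.
    by rewrite (graft_word_cat (true :: _)) /= nseq_cat_cons.
  by rewrite /graft_word /= drop0 W_entry //; case: k.
Qed.

End Rates.

Section GraftCherry.
Variables (l r : tree) (A : seq vpath) (p : vpath) (B : seq vpath).
Local Notation U := (Node l r).
Local Notation ps := (leaf_paths U).
Local Notation w := (map is_left (leaf_paths U)).
Local Notation X := (replace_at U p cherry, p).
Hypothesis lpE : leaf_paths U = A ++ p :: B.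

Let p_leaf : p \in ps. Proof. by rewrite lpE mem_cat mem_head orbT. Qed.
Let p_neq_nil : p != [::]. Proof. exact: leaf_paths_node_neq_nil p_leaf. Qed.
Let size_A : (size A < size ps)%N. Proof. by rewrite lpE size_cat /= addnS ltnS leq_addr. Qed.
Let w_true : true \in w.
Proof. by move: (head_word_node l r); case: (map _ _) => //= x s ->; rewrite mem_head. Qed.

Let index_p : index p ps = size A.
Proof.
rewrite lpE index_pivot //; move: (uniq_leaf_paths U); rewrite lpE cat_uniq /=.
by case/and3P => _ /norP [].
Qed.

Let collapse : replace_at (replace_at U p cherry) p Leaf = U.
Proof.
have pU := subtree_leaf_paths p_leaf.
by rewrite replace_atK ?pU // replace_at_subtree.
Qed.

Let right_childE : last false p = ~~ nth false w (size A).
Proof. by rewrite (nth_map [::]) // -index_p nth_index // (is_leftE false) ?negbK. Qed.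

Let not_rightmost :
  (rcons p true != last [::] (leaf_paths (replace_at U p cherry))) = (size A != (size w).-1).
Proof.
rewrite (leaf_paths_replace_cherry lpE) last_cat size_map lpE size_cat /=.
case: B lpE => [|b B'] lpE' /=; first by rewrite addn1 !eqxx.
rewrite addnS /= ltn_eqF; last by rewrite -{1}[size A]addn0 ltn_add2l.
apply: contraNneq (rcons_notin_leaf_paths true p_leaf) => ->.
by rewrite lpE' mem_cat in_cons mem_last !orbT.
Qed.

Let not_leftmost :
  (rcons p false != head [::] (leaf_paths (replace_at U p cherry))) = (size A != 0%N).
Proof.
rewrite (leaf_paths_replace_cherry lpE).
case: A lpE => [|a A'] lpE' /=; first by rewrite eqxx.
apply: contraNneq (rcons_notin_leaf_paths false p_leaf) => ->.
by rewrite lpE' mem_head.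
Qed.

Let pi_index_lt_leaves : (pi_index w (size A) < size ps)%N.
Proof.
have lt_A : (size A < size w)%N by rewrite size_map.
by move: (pi_index_lt (head_word_node l r) (last_word_node l r) lt_A); rewrite size_map.
Qed.

Lemma pi_map_replace_cherry :
  pi_map X =
    (replace_at U (nth [::] ps (pi_index w (size A))) cherry, nth [::] ps (pi_index w (size A))).
Proof.
have [b [p0 Ep]] : exists b p0, p = b :: p0 by case: (p) p_neq_nil => // b p0; exists b, p0.
rewrite /pi_map Ep; cbv beta iota; rewrite -Ep.
rewrite collapse not_rightmost not_leftmost index_p right_childE /pi_index.
case: ifPn => [right_p | left_p]; case: ifPn => c;
  apply: (congr1 (fun q => (replace_at U q cherry, q))).
- rewrite find_is_right ?map_drop // => h /mem_drop.
  exact: leaf_paths_node_neq_nil.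
- by rewrite (nth_rev_find_is_left w_true) size_map.
- rewrite -lt0n in c; have wA : true \in take (size A) w.
    have lt0 : (0 < size (take (size A) w))%N by rewrite size_takel // size_map ltnW.
    by move: (mem_nth false lt0); rewrite nth_take // nth0 (head_word_node l r).
  rewrite nth_rev_find_is_left; last by rewrite map_take.
  rewrite size_takel ?(ltnW size_A) // nth_take ?map_take //.
  by rewrite ltn_subrL c.
- by rewrite find_is_right //; apply: leaf_paths_node_neq_nil.
Qed.

Lemma muhat_pi_map (R : unitRingType) (alpha beta : R) :
  muhat alpha beta (pi_map X) = muhat alpha beta X.
Proof.
have lt_j := pi_index_lt_leaves; set j := pi_index _ _ in lt_j *.
have ps_j : ps = take j ps ++ nth [::] ps j :: drop j.+1 ps.
  by rewrite -drop_nth ?cat_take_drop.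
rewrite pi_map_replace_cherry -/j (muhat_replace_cherry alpha beta ps_j).
  by rewrite (muhat_replace_cherry alpha beta lpE).
exact/leaf_paths_node_neq_nil/mem_nth.
Qed.

Lemma muhat_mu_W (F : fieldType) (alpha beta : F) : alpha != 0 -> beta != 0 ->
  muhat alpha beta X = mu alpha beta (f X) * W alpha beta (Rconf (f X)) (Rconf (f (pi_map X))).
Proof.
move=> na nb; rewrite /f (muhat_replace_cherry alpha beta lpE) //.
rewrite (mu_replace_cherry na nb p_neq_nil (size_leaf_paths_node l r) lpE).
have lt_j := pi_index_lt_leaves; set j := pi_index _ _ in lt_j *.
have ps_j : ps = take j ps ++ nth [::] ps j :: drop j.+1 ps.
  by rewrite -drop_nth ?cat_take_drop.
rewrite pi_map_replace_cherry -/j (Rconf_replace_cherry lpE) (Rconf_replace_cherry ps_j).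
rewrite size_takel ?(ltnW lt_j) // W_pi_index ?size_map //.
  exact: head_word_node.
exact: last_word_node.
Qed.

End GraftCherry.

Lemma marked_collapse n T p : (0 < n)%N -> marked n (T, p) ->
  exists l r A B, leaf_paths (Node l r) = A ++ p :: B /\ T = replace_at (Node l r) p cherry.
Proof.
move=> n_gt0 /andP [/= /eqP size_T]; rewrite /is_cherry => Tp.
have {}Tp : subtree T p = Some cherry by case: (subtree T p) Tp => [[|[|? ?] [|? ?]]|].
have Tp_leaf : subtree (replace_at T p Leaf) p = Some Leaf by rewrite subtree_replace_at ?Tp.
have [A [B [lpE _]]] := leaf_paths_split_leaf Tp_leaf.
have graft_collapse : replace_at (replace_at T p Leaf) p cherry = T.
  by rewrite replace_atK ?Tp // replace_at_subtree.
case: p Tp {Tp_leaf} lpE graft_collapse => [|b p0] Tp lpE.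
  by case: T Tp size_T {lpE} => [|l r] [=] // -> -> /= size_T; exfalso; lia.
case: T size_T Tp lpE => [|l r] //= _.
by case: b => _ lpE <-; [exists l, (replace_at r p0 Leaf) | exists (replace_at l p0 Leaf), r];
  exists A, B.
Qed.

Theorem mainTheorem6 (R : realFieldType) (n : nat) (alpha beta : R) :
  (1 <= n)%N -> 0 < alpha <= 1 -> 0 < beta <= 1 ->
  (forall C C' : seq bool, size C = n -> size C' = n ->
     forall X : tree * vpath, inF n C' C X ->
       muhat alpha beta X = mu alpha beta (f X) * W alpha beta C' C)
  /\
  (forall X : tree * vpath, marked n X ->
     muhat alpha beta (pi_map X) = muhat alpha beta X).
Proof.
move=> n_gt0 /andP [alpha_gt0 _] /andP [beta_gt0 _].
split=> [C C' _ _ [T p] | [T p]].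
- case/and3P => /(marked_collapse n_gt0) [l [r [A [B [lpE ->]]]]] /eqP <- /eqP <-.
  by rewrite (muhat_mu_W lpE) ?lt0r_neq0.
- by case/(marked_collapse n_gt0) => [l [r [A [B [lpE ->]]]]]; rewrite (muhat_pi_map lpE).
Qed.
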